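(* Let $f:\{0,1\}^n\times\{0,1\}^n\to\{0,1\}$ and let $C^0,C^1$ be Clifford unitaries on $n_A$ qubits. Given $n_A$ copies of a perfect $f$-Bell oracle, the $f$-Clifford-measure task for $(f,C^0,C^1)$ can be implemented perfectly.
   Context: Tasks are performed in non-local quantum computation form: Alice holds $x$ (and any quantum input), Bob holds $y$; local operations, one simultaneous round of communication, local operations; Alice outputs register $Z$, Bob outputs $Z'$. $f$-Bell: Alice holds a two-qubit system; target channel $\mathcal{B}^{f(x,y)}$ with $\mathcal{B}^0(\rho)=\sum_{a,b}\langle a,b|\rho|a,b\rangle|a,b\rangle\langle a,b|_Z\otimes|a,b\rangle\langle a,b|_{Z'}$ and $\mathcal{B}^1(\rho)=\sum_{a,b}\langle\Psi_{a,b}|\rho|\Psi_{a,b}\rangle|a,b\rangle\langle a,b|_Z\otimes|a,b\rangle\langle a,b|_{Z'}$, $\{|\Psi_{a,b}\rangle\}$ the Bell basis. $f$-Clifford-measure for $(f,C^0,C^1)$: Alice holds an $n_A$-qubit system $A$; the target channel is $\mathcal{M}^{C^{f(x,y)}}$ where $\mathcal{M}^{C}(\rho_A)=\sum_{b\in\{0,1\}^{n_A}}\langle b|C^\dagger\rho C|b\rangle\,|b\rangle\langle b|_Z\otimes|b\rangle\langle b|_{Z'}$. A perfect oracle is a black-box exact implementation of the task, used in parallel on the same classical inputs $x,y$; ''implemented perfectly'' means the resulting channel equals the target channel for every $(x,y)$. *)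

(* Finite-dimensional quantum mechanics over an arbitrary
   numClosedFieldType C (e.g. complex numbers R[i]); operators on the space
   with basis the finite type I, valued in the space with basis J, are
   functions J -> I -> C (row index first). *)
From HB Require Import structures.
From mathcomp Require Import all_boot all_order all_algebra.
Set Implicit Arguments. Unset Strict Implicit. Unset Printing Implicit Defensive.
Import Order.TTheory GRing.Theory Num.Theory.
Local Open Scope ring_scope.

Definition bits (n : nat) := {ffun 'I_n -> bool}.

Section Quantum.
Variable C : numClosedFieldType.

Record channel (I J : finType) := Channel {
  ch_env : finType;
  ch_kraus : ch_env -> J -> I -> C;
  ch_tp : forall i i' : I,
    \sum_(e : ch_env) \sum_(j : J) (ch_kraus e j i)^* * ch_kraus e j i'
      = (i == i')%:R }.

(* Pauli operator X^a Z^b on n qubits (tensor product over the qubits). *)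
Definition pauli (n : nat) (a b : bits n) (r s : bits n) : C :=
  \prod_(i < n) ((r i == xorb (s i) (a i))%:R * (-1) ^+ (b i && s i)).

(* Clifford unitary on n qubits: a unitary normalizing the Pauli group
   {c X^a Z^b | c in {1,-1,i,-i}}. *)
Definition clifford (n : nat) (U : bits n -> bits n -> C) : Prop :=
  (forall q q' : bits n, \sum_(r : bits n) (U r q)^* * U r q' = (q == q')%:R) /\
  (forall a b : bits n, exists (c : C) (a' b' : bits n),
     c ^+ 4 = 1 /\
     forall r s : bits n,
       \sum_(p : bits n) \sum_(q : bits n) U r p * pauli a b p q * (U s q)^*
         = c * pauli a' b' r s).

(* Computational basis vector |a,b> (f-value false) or Bell vector
   |Psi_{a,b}> = (|0,a> + (-1)^b |1,1+a>)/sqrt 2 (f-value true), as a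
   function of the two-qubit basis index (s,t). *)
Definition bell_vec (g : bool) (ab st : (bool * bool)%type) : C :=
  if ~~ g then (st == ab)%:R
  else (sqrtC 2)^-1 *
       ((st == (false, ab.1))%:R + (-1) ^+ ab.2 * (st == (true, ~~ ab.1))%:R).

(* m parallel copies of the f-Bell oracle: input system = m two-qubit
   systems, outcome o in ({0,1}^2)^m; the measurement vector for outcome o. *)
Definition bell_oracle_vec (m : nat) (g : bool)
    (o : {ffun 'I_m -> (bool * bool)%type}) (st : {ffun 'I_m -> (bool * bool)%type}) : C :=
  \prod_(i < m) bell_vec g (o i) (st i).

(* A non-local protocol (one simultaneous round) in which the parties use,
   during the communication round, an oracle that measures an Alice-held
   system OI and hands the classical outcome o : O to both parties.
   Alice holds x : X and the quantum input QA; Bob holds y : Y.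
   - shared pure resource state psi on RA * RB;
   - Alice's first local channel (depending on x) maps QA*RA to
     (oracle input OI * message MA) * kept KA;
   - Bob's first local channel (depending on y) maps RB to message MB * kept KB;
   - messages are exchanged and the oracle outcome o is delivered to both;
   - Alice's final channel (depending on x,o) maps KA*MB to output Z;
     Bob's final channel (depending on y,o) maps KB*MA to output Z'. *)
Record oprotocol (X Y QA OI O Z Z' : finType) := OProtocol {
  RA : finType; RB : finType; MA : finType; MB : finType;
  KA : finType; KB : finType;
  psi : RA -> RB -> C;
  psi_norm : \sum_(ra : RA) \sum_(rb : RB) psi ra rb * (psi ra rb)^* = 1;
  A1 : X -> channel (QA * RA)%type ((OI * MA) * KA)%type;
  B1 : Y -> channel RB (MB * KB)%type;
  A2 : X -> O -> channel (KA * MB)%type Z;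
  B2 : Y -> O -> channel (KB * MA)%type Z'
}.

Section Output.
Variables (X Y QA OI O Z Z' : finType) (P : oprotocol X Y QA OI O Z Z').
(* oracle: for oracle parameter g (= f(x,y)), measurement vectors v g o *)
Variables (fv : X -> Y -> bool) (v : bool -> O -> OI -> C).

Definition oprot_kraus (x : X) (y : Y)
    (e1 : ch_env (A1 P x)) (e2 : ch_env (B1 P y)) (o : O)
    (e3 : ch_env (A2 P x o)) (e4 : ch_env (B2 P y o))
    (zz : (Z * Z')%type) (qa : QA) : C :=
  \sum_(ra : RA P) \sum_(rb : RB P) \sum_(oi : OI) \sum_(ma : MA P)
  \sum_(ka : KA P) \sum_(mb : MB P) \sum_(kb : KB P)
    ch_kraus e3 zz.1 (ka, mb) * ch_kraus e4 zz.2 (kb, ma)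
    * (v (fv x y) o oi)^*
    * ch_kraus e1 ((oi, ma), ka) (qa, ra) * ch_kraus e2 (mb, kb) rb
    * psi ra rb.

Definition oprot_output (x : X) (y : Y) (rho : QA -> QA -> C)
    (zz ww : (Z * Z')%type) : C :=
  \sum_(e1 : ch_env (A1 P x)) \sum_(e2 : ch_env (B1 P y)) \sum_(o : O)
  \sum_(e3 : ch_env (A2 P x o)) \sum_(e4 : ch_env (B2 P y o))
  \sum_(qa : QA) \sum_(qa' : QA)
    oprot_kraus e1 e2 e3 e4 zz qa * rho qa qa' * (oprot_kraus e1 e2 e3 e4 ww qa')^*.
End Output.

(* The target channel M^U: measure in basis {U|b>}, copy b to Z and Z'. *)
Definition clifford_measure (n : nat) (U : bits n -> bits n -> C)
    (rho : bits n -> bits n -> C) (zz ww : (bits n * bits n)%type) : C :=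
  \sum_(b : bits n)
    ((zz.1 == b) && (zz.2 == b) && (ww.1 == b) && (ww.2 == b))%:R *
    (\sum_(q : bits n) \sum_(q' : bits n) (U q b)^* * rho q q' * U q' b).

End Quantum.

From HB Require Import structures.
From mathcomp Require Import all_boot all_order all_algebra.
From mathcomp Require Import sesquilinear spectral ring.
Set Implicit Arguments. Unset Strict Implicit. Unset Printing Implicit Defensive.
Import Order.TTheory GRing.Theory Num.Theory.
Local Open Scope ring_scope.
Local Open Scope sesquilinear_scope.

(* Alice applies C0^dagger to her input and pairs its qubits with an ancilla
   prepared, for a uniformly random key k that she sends to Bob, in the complex
   conjugate of column k of C0^dagger C1; all 2nA qubits go to the f-Bell oracles.
   On f(x,y) = 0 the oracles measure in the computational basis, so the outcome
   on the input qubits is a C0-measurement outcome.  On f(x,y) = 1 the Kraus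
   operator for key k and Bell outcome (a,b) is proportional to the conjugate of
   column k of C0 X^a Z^b C0^dagger C1 = c C1 X^aQ Z^bQ with |c| = 1 (Clifford
   unitaries normalize the Pauli group, and so do their inverses), i.e. to a
   C1-basis vector with label k + aQ.  Both parties know x, y, k and the oracle
   outcome, so both output the same string. *)

Lemma sumr_delta (R : pzSemiRingType) (I : finType) (j : I) (F : I -> R) :
  \sum_i (i == j)%:R * F i = F j.
Proof.
under eq_bigr do rewrite mulr_natl mulrb.
by rewrite -big_mkcond big_pred1_eq.
Qed.

Lemma sum_pair (V : nmodType) (I J : finType) (F : I * J -> V) :
  \sum_p F p = \sum_i \sum_j F (i, j).
Proof. by rewrite pair_bigA; apply: eq_bigr => -[]. Qed.

Lemma sum_unit (V : nmodType) (F : unit -> V) : \sum_i F i = F tt.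
Proof. by rewrite (big_only1 tt) // => -[]. Qed.

Lemma exchange_big2 (V : nmodType) (I J K L : finType) (F : I -> J -> K -> L -> V) :
  \sum_i \sum_j \sum_k \sum_l F i j k l = \sum_k \sum_l \sum_i \sum_j F i j k l.
Proof.
under eq_bigr do rewrite exchange_big /=; rewrite exchange_big /=.
by apply: eq_bigr => k _; under eq_bigr do rewrite exchange_big /=; rewrite exchange_big.
Qed.

Lemma prod_eq_ffun (R : comPzSemiRingType) (I : finType) (T : eqType)
    (f g : {ffun I -> T}) :
  \prod_i ((f i == g i)%:R : R) = (f == g)%:R.
Proof.
have [->|ne] := eqVneq f g; first by rewrite big1 // => i _; rewrite eqxx.
have /existsP[i /negPf fi] : [exists i, f i != g i].
  by apply: contraNT ne => /existsPn fE; apply/eqP/ffunP => i; apply/eqP/negPn/fE.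
by rewrite (bigD1 i) //= fi mul0r.
Qed.

Definition bxor m (a b : bits m) : bits m := [ffun i => xorb (a i) (b i)].

Lemma bxorK m (a b : bits m) : bxor (bxor b a) a = b.
Proof. by apply/ffunP => i; rewrite !ffunE; case: (b i); case: (a i). Qed.

Lemma bxor_eq m (k a b : bits m) : (bxor k a == b) = (k == bxor b a).
Proof. by apply/eqP/eqP => [<-|->]; rewrite bxorK. Qed.

Lemma card_bits m : #|{: bits m}| = (2 ^ m)%N.
Proof. by rewrite card_ffun card_bool card_ord. Qed.

Definition pbits m := {ffun 'I_m -> (bool * bool)%type}.
Definition pfst m (o : pbits m) : bits m := [ffun i => (o i).1].
Definition psnd m (o : pbits m) : bits m := [ffun i => (o i).2].
Definition ppair m (a t : bits m) : pbits m := [ffun i => (a i, t i)].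

Lemma pfst_pair m (a t : bits m) : pfst (ppair a t) = a.
Proof. by apply/ffunP => i; rewrite !ffunE. Qed.

Lemma psnd_pair m (a t : bits m) : psnd (ppair a t) = t.
Proof. by apply/ffunP => i; rewrite !ffunE. Qed.

Lemma card_pbits m : #|{: pbits m}| = (2 ^ m * 2 ^ m)%N.
Proof. by rewrite card_ffun card_prod card_bool card_ord -expnMn. Qed.

Lemma sum_pbits (V : nmodType) m (F : pbits m -> V) :
  \sum_o F o = \sum_a \sum_t F (ppair a t).
Proof.
rewrite pair_bigA /= (reindex (fun p : bits m * bits m => ppair p.1 p.2)) //=.
exists (fun o => (pfst o, psnd o)) => [[a t] _|o _]; first by rewrite pfst_pair psnd_pair.
by apply/ffunP => i; rewrite !ffunE; case: (o i).
Qed.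

Section Pauli.
Variables (C : numClosedFieldType) (m : nat).
Implicit Types a b r s : bits m.

Definition zsign b s : C := (-1) ^+ (\sum_i (b i && s i)).

Lemma pauliE a b r s : pauli C a b r s = (r == bxor s a)%:R * zsign b s.
Proof.
rewrite /pauli big_split /= /zsign -prodrXr -prod_eq_ffun; congr (_ * _).
by apply: eq_bigr => i _; rewrite ffunE.
Qed.

Lemma norm_zsign b s : `|zsign b s| = 1.
Proof. by rewrite normrX normrN1 expr1n. Qed.

Lemma conj_zsign b s : (zsign b s)^* = zsign b s.
Proof. by rewrite rmorphXn rmorphN1. Qed.

Lemma conj_pauli a b r s : (pauli C a b r s)^* = pauli C a b r s.
Proof. by rewrite !pauliE rmorphM /= rmorph_nat conj_zsign. Qed.

Lemma pauli_inj a b a' b' (c c' : C) : c != 0 ->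
  (forall r s, c * pauli C a b r s = c' * pauli C a' b' r s) -> a = a' /\ b = b'.
Proof.
move=> c_neq0 E.
have bxor0 a1 : bxor [ffun _ => false] a1 = a1 by apply/ffunP => i; rewrite !ffunE.
have zsign0 b1 : zsign b1 [ffun _ => false] = 1.
  by rewrite /zsign big1 // => i _; rewrite ffunE andbF.
have := E a [ffun _ => false]; rewrite !pauliE !bxor0 !zsign0 eqxx /= mulr1n !mulr1 => cE.
have aE : a = a'.
  by have [//|/negPf ne] := eqVneq a a'; move: c_neq0; rewrite cE ne mulr0 eqxx.
subst a'; rewrite eqxx mulr1 in cE; subst c'.
split=> //; apply/ffunP => i; pose e := [ffun j => j == i].
have zsign_e b1 : zsign b1 e = (-1) ^+ b1 i.
  rewrite /zsign (bigD1 i) //= big1 ?addn0 => [|j /negPf ji]; first by rewrite ffunE eqxx andbT.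
  by rewrite ffunE ji andbF.
have := E (bxor e a) e; rewrite !pauliE eqxx !mul1r !zsign_e.
by move/(mulfI c_neq0); apply: signr_inj.
Qed.

End Pauli.
Arguments zsign {C m}.

Section MatrixOfKernel.
Variables (C : numClosedFieldType) (T : finType).
Implicit Types A B U : T -> T -> C.

Definition mxof A : 'M[C]_#|T| := \matrix_(i, j) A (enum_val i) (enum_val j).

Lemma mxofE A r s : mxof A (enum_rank r) (enum_rank s) = A r s.
Proof. by rewrite mxE !enum_rankK. Qed.

Lemma sum_enum_val (F : T -> C) : \sum_(i < #|T|) F (enum_val i) = \sum_r F r.
Proof. by rewrite (big_enum_val F). Qed.

Lemma mulmx_mxof A B : mxof A *m mxof B = mxof (fun r s => \sum_p A r p * B p s).
Proof.
apply/matrixP => i j; rewrite !mxE -sum_enum_val.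
by apply: eq_bigr => k _; rewrite !mxE.
Qed.

Lemma trmxC_mxof A : (mxof A)^t* = mxof (fun r s => (A s r)^*).
Proof. by apply/matrixP => i j; rewrite !mxE. Qed.

Lemma scalemx_mxof c A : c *: mxof A = mxof (fun r s => c * A r s).
Proof. by apply/matrixP => i j; rewrite !mxE. Qed.

Lemma mxof1 : mxof (fun r s => (r == s)%:R) = 1%:M.
Proof. by apply/matrixP => i j; rewrite !mxE (inj_eq enum_val_inj). Qed.

Lemma unitarymx_mxof U :
  (forall q q', \sum_r (U r q)^* * U r q' = (q == q')%:R) -> mxof U \is unitarymx.
Proof.
move=> U_cols; rewrite -trmxC_unitary; apply/unitarymxP.
rewrite trmxCK trmxC_mxof mulmx_mxof -mxof1.
by apply/matrixP => i j; rewrite !mxE U_cols.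
Qed.

Lemma unitarymx_rows U : mxof U \is unitarymx ->
  forall q q', \sum_p U q p * (U q' p)^* = (q == q')%:R.
Proof.
move=> /unitarymxP; rewrite trmxC_mxof mulmx_mxof -mxof1 => /matrixP E q q'.
by have := E (enum_rank q) (enum_rank q'); rewrite !mxofE.
Qed.

Lemma unitarymx_cols U : mxof U \is unitarymx ->
  forall q q', \sum_p (U p q)^* * U p q' = (q == q')%:R.
Proof.
rewrite -trmxC_unitary trmxC_mxof => /unitarymx_rows E q q'.
by rewrite -E; apply: eq_bigr => p _; rewrite /= conjCK.
Qed.

End MatrixOfKernel.

Lemma unitarymx_trCmul (C : numClosedFieldType) n (u : 'M[C]_n) :
  u \is unitarymx -> u^t* *m u = 1%:M.
Proof. by rewrite -trmxC_unitary => /unitarymxP; rewrite trmxCK. Qed.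

Lemma norm_eq1_root4 (C : numClosedFieldType) (c : C) : c ^+ 4 = 1 -> `|c| = 1.
Proof. by move=> c4; apply/eqP; rewrite -(pexpr_eq1 (n := 4)) // -normrX c4 normr1. Qed.

Section PauliMatrices.
Variables (C : numClosedFieldType) (m : nat).

Definition pmx (a b : bits m) : 'M[C]_#|bits m| := mxof (pauli C a b).

Lemma mulmx_pmx (V : bits m -> bits m -> C) a b q k :
  (mxof V *m pmx a b) (enum_rank q) (enum_rank k) = zsign b k * V q (bxor k a).
Proof.
rewrite mulmx_mxof mxofE; under eq_bigr do rewrite pauliE mulrCA.
by rewrite sumr_delta mulrC.
Qed.

Definition pauli_conjugating (u : 'M[C]_#|bits m|) :=
  forall a b, exists (c : C) (a' b' : bits m),
    c ^+ 4 = 1 /\ u *m pmx a b *m u^t* = c *: pmx a' b'.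

Lemma clifford_mxof (U : bits m -> bits m -> C) :
  clifford U -> mxof U \is unitarymx /\ pauli_conjugating (mxof U).
Proof.
case=> U_cols U_conj; split; first exact: unitarymx_mxof.
move=> a b; have [c [a' [b' [c4 E]]]] := U_conj a b.
exists c, a', b'; split => //.
rewrite /pmx trmxC_mxof !mulmx_mxof scalemx_mxof; apply/matrixP => i j.
rewrite !mxE -E; under eq_bigr do rewrite big_distrl /=.
by rewrite exchange_big.
Qed.

Variable u : 'M[C]_#|bits m|.
Hypotheses (u_unitary : u \is unitarymx) (u_conj : pauli_conjugating u).

(* Conjugation by u acts injectively on the finitely many Pauli labels, hence
   bijectively. *)
Lemma pauli_conjugating_adj : pauli_conjugating (u^t*).
Proof.
have /fin_all_exists[phi phiP] : forall ab : bits m * bits m,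
    exists (ab' : bits m * bits m) (c : C),
      c ^+ 4 = 1 /\ u *m pmx ab.1 ab.2 *m u^t* = c *: pmx ab'.1 ab'.2.
  by move=> [a b]; have [c [a' [b' E]]] := u_conj a b; exists (a', b'), c.
have conjK A B (c : C) : u *m A *m u^t* = c *: B -> A = c *: (u^t* *m B *m u).
  move=> E; rewrite scalemxAl scalemxAr -E !mulmxA unitarymx_trCmul // mul1mx.
  by rewrite -mulmxA unitarymx_trCmul // mulmx1.
have phi_inj : injective phi.
  move=> [a1 b1] [a2 b2] phiE.
  have [c1 [/norm_eq1_root4 c1_norm /conjK E1]] := phiP (a1, b1).
  have [c2 [_ /conjK E2]] := phiP (a2, b2).
  rewrite /= phiE in E1 E2.
  have c1_neq0 : c1 != 0 by rewrite -normr_eq0 c1_norm oner_eq0.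
  suff [-> ->] : a2 = a1 /\ b2 = b1 by [].
  apply: (pauli_inj c1_neq0 (c' := c2)) => r s.
  have : c1 *: pmx a2 b2 = c2 *: pmx a1 b1 by rewrite E1 E2 !scalerA mulrC.
  by move/matrixP/(_ (enum_rank r) (enum_rank s)); rewrite !mxE !enum_rankK.
have [psi _ phiK] := injF_bij phi_inj.
move=> a' b'; have [c [c4 E]] := phiP (psi (a', b')); rewrite phiK /= in E.
exists c^-1, (psi (a', b')).1, (psi (a', b')).2; split; first by rewrite exprVn c4 invr1.
rewrite trmxCK (conjK _ _ _ E) scalerA mulVf ?scale1r //.
by rewrite -normr_eq0 (norm_eq1_root4 c4) oner_eq0.
Qed.
End PauliMatrices.
Arguments pmx {C m}.

Definition pauli_correction (C : numClosedFieldType) m (u v : 'M[C]_#|bits m|)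
    (a b aQ : bits m) :=
  exists (c : C) (bQ : bits m),
    `|c| = 1 /\ u *m pmx a b *m (u^t* *m v) = c *: (v *m pmx aQ bQ).

Lemma pauli_correction_exists (C : numClosedFieldType) m (u v : 'M[C]_#|bits m|) :
  pauli_conjugating u -> v \is unitarymx -> pauli_conjugating v ->
  forall a b, exists aQ, pauli_correction u v a b aQ.
Proof.
move=> u_conj v_unitary v_conj a b.
have [c0 [a' [b' [c0_4 E0]]]] := u_conj a b.
have [c1 [aQ [bQ [c1_4]]]] := pauli_conjugating_adj v_unitary v_conj a' b'.
rewrite trmxCK => E1.
exists aQ, (c0 * c1), bQ; split; first by rewrite normrM !norm_eq1_root4 ?mulr1.
rewrite mulmxA E0 -scalemxAl -[pmx a' b' *m v]mul1mx -(unitarymxP v_unitary).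
by rewrite -!mulmxA [v^t* *m _]mulmxA E1 -scalemxAr scalerA.
Qed.

Section Postprocessing.
Variables (C : numClosedFieldType) (X Y QA OI O R Z : finType).

(* One Kraus operator |h e><e| per input e, since h need not be injective. *)
Lemma classical_channel_tp (I J : finType) (h : I -> J) (i i' : I) :
  \sum_(e : I) \sum_(j : J)
     (((i == e)%:R * (j == h e)%:R : C))^* * ((i' == e)%:R * (j == h e)%:R)
  = (i == i')%:R.
Proof.
rewrite (big_only1 i) // => [|e /negPf ie _]; last first.
  by apply: big1 => j _; rewrite eq_sym ie mul0r rmorph0 mul0r.
rewrite eqxx (big_only1 (h i)) ?eqxx => [|//|j /negPf -> _].
  by rewrite /= mulr1 rmorph1 mul1r mulr1 eq_sym.
by rewrite mulr0 rmorph0 mul0r.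
Qed.

Definition classical_channel (I J : finType) (h : I -> J) : channel C I J :=
  Channel (classical_channel_tp h).

Variable K : R -> OI -> QA -> C.
Hypothesis K_tp : forall q q', \sum_k \sum_oi (K k oi q)^* * K k oi q' = (q == q')%:R.

Definition encoder_kraus (x : X) (k : R) (j : (OI * (X * R)) * R) (i : QA * unit) : C :=
  (j.1.2 == (x, k))%:R * (j.2 == k)%:R * K k j.1.1 i.1.

Lemma encoder_tp x i i' :
  \sum_k \sum_j (encoder_kraus x k j i)^* * encoder_kraus x k j i' = (i == i')%:R.
Proof.
case: i i' => [q []] [q' []]; rewrite xpair_eqE eqxx andbT -K_tp.
apply: eq_bigr => k _; rewrite 2!sum_pair; apply: eq_bigr => oi _.
rewrite (big_only1 (x, k)) // => [|ma /negPf ma_neq _]; last first.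
  by apply: big1 => ka _; rewrite /encoder_kraus /= ma_neq !mul0r rmorph0 mul0r.
rewrite (big_only1 k) // => [|ka /negPf ka_neq _]; last first.
  by rewrite /encoder_kraus /= ka_neq mulr0 !mul0r rmorph0 mul0r.
by rewrite /encoder_kraus /= !eqxx !mul1r.
Qed.

Definition encoder x : channel C (QA * unit)%type ((OI * (X * R)) * R)%type :=
  Channel (encoder_tp x).

Lemma unit_state_norm : \sum_(ra : unit) \sum_(rb : unit) 1 * (1 : C)^* = 1.
Proof. by rewrite !sum_unit rmorph1 mulr1. Qed.

Variable dec : X -> Y -> O -> R -> Z.

Definition postprocessing_protocol : oprotocol C X Y QA OI O Z Z :=
  @OProtocol C X Y QA OI O Z Z unit unit (X * R)%type Y R unit
    (fun _ _ => 1) unit_state_norm encoder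
    (fun y => classical_channel (fun _ : unit => (y, tt)))
    (fun x o => classical_channel (fun p : R * Y => dec x p.2 o p.1))
    (fun y o => classical_channel (fun p : unit * (X * R) => dec p.2.1 y o p.2.2)).

Variables (fv : X -> Y -> bool) (v : bool -> O -> OI -> C).

Definition oracle_amp g k o q := \sum_oi (v g o oi)^* * K k oi q.

Lemma oprot_kraus_postprocessing x y k (e2 : unit) o e3 e4 zz q :
  @oprot_kraus C _ _ _ _ _ _ _ postprocessing_protocol fv v x y k e2 o e3 e4 zz q =
  (e3 == (k, y))%:R * (e4 == (tt, (x, k)))%:R *
  ((zz == (dec x y o k, dec x y o k))%:R * oracle_amp (fv x y) k o q).
Proof.
rewrite /oprot_kraus /= !sum_unit /oracle_amp !big_distrr /=; apply: eq_bigr => oi _.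
rewrite (big_only1 (x, k)) // => [|ma /negPf ma_neq _]; last first.
  apply: big1 => ka _; apply: big1 => mb _; apply: big1 => kb _.
  by rewrite /encoder_kraus /= ma_neq !(mul0r, mulr0).
rewrite (big_only1 k) // => [|ka /negPf ka_neq _]; last first.
  apply: big1 => mb _; apply: big1 => kb _.
  by rewrite /encoder_kraus /= ka_neq !(mul0r, mulr0).
rewrite (big_only1 y) // => [|mb /negPf mb_neq _]; last first.
  by apply: big1 => kb _; rewrite xpair_eqE mb_neq !(mul0r, mulr0).
rewrite sum_unit /encoder_kraus /= !eqxx !mulr1 !mul1r.
have [<-|_] := eqVneq (k, y) e3; last by rewrite !mul0r.
have [<-|_] := eqVneq (tt, (x, k)) e4; last by rewrite !(mul0r, mulr0).
case: zz => z1 z2; rewrite /= xpair_eqE -mulnb natrM /=; ring.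
Qed.

Lemma oprot_output_postprocessing x y rho zz ww :
  oprot_output postprocessing_protocol fv v x y rho zz ww =
  \sum_k \sum_o
    (zz == (dec x y o k, dec x y o k))%:R * (ww == (dec x y o k, dec x y o k))%:R *
    \sum_q \sum_q' oracle_amp (fv x y) k o q * rho q q' * (oracle_amp (fv x y) k o q')^*.
Proof.
rewrite /oprot_output; apply: eq_bigr => k _; rewrite sum_unit; apply: eq_bigr => o _.
rewrite (big_only1 (k, y)) // => [|e3 /negPf e3_neq _]; last first.
  apply: big1 => e4 _; apply: big1 => q _; apply: big1 => q' _.
  by rewrite !oprot_kraus_postprocessing e3_neq !mul0r.
rewrite (big_only1 (tt, (x, k))) // => [|e4 /negPf e4_neq _]; last first.
  apply: big1 => q _; apply: big1 => q' _.
  by rewrite !oprot_kraus_postprocessing e4_neq !(mul0r, mulr0).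
rewrite big_distrr; apply: eq_bigr => q _; rewrite big_distrr; apply: eq_bigr => q' _.
rewrite !oprot_kraus_postprocessing !eqxx /= !rmorphM /= !rmorph_nat.
ring.
Qed.

End Postprocessing.

Lemma clifford_measure_postprocessed (C : numClosedFieldType) m (R O : finType)
    (d : O -> R -> bits m) (amp : R -> O -> bits m -> C) (M : bits m -> bits m -> C)
    rho zz ww :
  (forall b q q', \sum_k \sum_o (d o k == b)%:R * (amp k o q * (amp k o q')^*)
                  = (M q b)^* * M q' b) ->
  \sum_k \sum_o (zz == (d o k, d o k))%:R * (ww == (d o k, d o k))%:R *
     \sum_q \sum_q' amp k o q * rho q q' * (amp k o q')^*
  = clifford_measure M rho zz ww.
Proof.
move=> M_decomp; pose S k o := \sum_q \sum_q' amp k o q * rho q q' * (amp k o q')^*.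
have split_b k o : (zz == (d o k, d o k))%:R * (ww == (d o k, d o k))%:R * S k o
    = \sum_b (d o k == b)%:R * ((zz == (b, b))%:R * (ww == (b, b))%:R * S k o).
  by under eq_bigr do rewrite eq_sym; rewrite sumr_delta.
under eq_bigr => k _ do under eq_bigr => o _ do rewrite -/(S k o) split_b.
clear split_b.
rewrite exchange_big; under eq_bigr do rewrite exchange_big; rewrite exchange_big /=.
apply: eq_bigr => b _.
have -> : ((zz.1 == b) && (zz.2 == b) && (ww.1 == b) && (ww.2 == b))%:R
           = (zz == (b, b))%:R * (ww == (b, b))%:R :> C.
  by case: zz ww => [z1 z2] [w1 w2]; rewrite !xpair_eqE -natrM mulnb !andbA.
transitivity ((zz == (b, b))%:R * (ww == (b, b))%:R *
                \sum_o \sum_k (d o k == b)%:R * S k o).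
  rewrite big_distrr; apply: eq_bigr => o _; rewrite big_distrr.
  by apply: eq_bigr => k _; rewrite mulrCA.
congr (_ * _).
rewrite exchange_big /=.
under eq_bigr do under eq_bigr do rewrite /S big_distrr /=.
under eq_bigr do under eq_bigr do under eq_bigr do rewrite big_distrr /=.
rewrite exchange_big2; apply: eq_bigr => q _; apply: eq_bigr => q' _.
rewrite mulrAC mulrC -M_decomp big_distrr; apply: eq_bigr => k _.
by rewrite big_distrr; apply: eq_bigr => o _; rewrite /=; ring.
Qed.

Section BellOracle.
Variables (C : numClosedFieldType) (m : nat).

Definition bell_scale : C := (sqrtC 2)^-1 ^+ m.

Lemma conj_bell_scale : bell_scale^* = bell_scale.
Proof.
rewrite /bell_scale rmorphXn fmorphV /= conj_Creal //.
by rewrite ger0_real // sqrtC_ge0 ler0n.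
Qed.

Lemma bell_scale_card_bits : bell_scale ^+ 2 * #|{: bits m}|%:R = 1.
Proof.
rewrite card_bits /bell_scale -exprM mulnC exprM exprVn sqrtCK natrX -exprMn.
by rewrite mulVf ?expr1n // pnatr_eq0.
Qed.

Lemma bell_scale_card_pbits : bell_scale ^+ 4 * #|{: pbits m}|%:R = 1.
Proof.
rewrite card_pbits natrM -card_bits -[4%N]/(2 + 2)%N exprD mulrACA.
by rewrite bell_scale_card_bits mulr1.
Qed.

Lemma bell_oracle_vec_false (o oi : pbits m) : bell_oracle_vec C false o oi = (oi == o)%:R.
Proof. by rewrite /bell_oracle_vec -prod_eq_ffun. Qed.

Lemma bell_oracle_vec_true (o oi : pbits m) :
  bell_oracle_vec C true o oi = bell_scale * pauli C (pfst o) (psnd o) (psnd oi) (pfst oi).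
Proof.
rewrite /bell_oracle_vec /pauli /bell_scale -[in X in X * _](card_ord m) -prodr_const.
rewrite -big_split; apply: eq_bigr => i _; rewrite !ffunE /bell_vec /=; congr (_ * _).
by case: (oi i) (o i) => [[] []] [[] []];
  rewrite /= ?expr0 ?expr1 ?mulr1 ?mul1r ?mulr0 ?mul0r ?addr0 ?add0r.
Qed.

End BellOracle.

Section Teleportation.
Variables (C : numClosedFieldType) (m : nat) (U V : bits m -> bits m -> C).
Hypotheses (U_unitary : mxof U \is unitarymx) (V_unitary : mxof V \is unitarymx).

Definition adj_mul (s k : bits m) : C := \sum_r (U r s)^* * V r k.

Lemma mxof_adj_mul : mxof adj_mul = (mxof U)^t* *m mxof V.
Proof. by rewrite trmxC_mxof mulmx_mxof. Qed.

Lemma adj_mul_cols k k' : \sum_s (adj_mul s k)^* * adj_mul s k' = (k == k')%:R.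
Proof.
apply: unitarymx_cols; rewrite mxof_adj_mul mul_unitarymx //.
by rewrite trmxC_unitary.
Qed.

(* Alice's encoding with key k: U^dagger on the second qubit of each oracle pair,
   the conjugate of column k of U^dagger V on the first ones. *)
Definition tele_kraus (k : bits m) (oi : pbits m) (q : bits m) : C :=
  bell_scale C m * (U q (psnd oi))^* * (adj_mul (pfst oi) k)^*.

Lemma tele_kraus_tp q q' :
  \sum_k \sum_oi (tele_kraus k oi q)^* * tele_kraus k oi q' = (q == q')%:R.
Proof.
have E k s t : (tele_kraus k (ppair s t) q)^* * tele_kraus k (ppair s t) q'
    = bell_scale C m ^+ 2 * ((adj_mul s k)^* * adj_mul s k) * (U q t * (U q' t)^*).
  by rewrite /tele_kraus pfst_pair psnd_pair !rmorphM /= !conjCK conj_bell_scale; ring.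
under eq_bigr do rewrite sum_pbits.
under eq_bigr do under eq_bigr do under eq_bigr do rewrite E.
under eq_bigr do under eq_bigr do rewrite -big_distrr /= unitarymx_rows //.
under eq_bigr do rewrite -big_distrl -big_distrr /= adj_mul_cols eqxx mulr1.
by rewrite -big_distrl /= sumr_const -[_ ^+ 2 *+ _]mulr_natr bell_scale_card_bits mul1r.
Qed.

Local Notation amp g := (oracle_amp tele_kraus (@bell_oracle_vec C m) g).

Lemma tele_amp_false k o q : amp false k o q = tele_kraus k o q.
Proof.
rewrite /oracle_amp; under eq_bigr do rewrite bell_oracle_vec_false rmorph_nat.
exact: sumr_delta.
Qed.

Lemma tele_computational b q q' :
  \sum_k \sum_o (psnd o == b)%:R * (amp false k o q * (amp false k o q')^*)
  = (U q b)^* * U q' b.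
Proof.
have E k s : \sum_t (psnd (ppair s t) == b)%:R *
                (amp false k (ppair s t) q * (amp false k (ppair s t) q')^*)
    = bell_scale C m ^+ 2 * ((U q b)^* * U q' b) * ((adj_mul s k)^* * adj_mul s k).
  under eq_bigr do rewrite psnd_pair; rewrite sumr_delta !tele_amp_false /tele_kraus.
  by rewrite pfst_pair psnd_pair !rmorphM /= !conjCK conj_bell_scale; ring.
under eq_bigr do rewrite sum_pbits; under eq_bigr do under eq_bigr do rewrite E.
under eq_bigr do rewrite -big_distrr /= adj_mul_cols eqxx mulr1.
by rewrite sumr_const -mulr_natr mulrAC bell_scale_card_bits mul1r.
Qed.

Lemma tele_amp_true k o q c aQ bQ :
  mxof U *m pmx (pfst o) (psnd o) *m ((mxof U)^t* *m mxof V)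
    = c *: (mxof V *m pmx aQ bQ) ->
  amp true k o q = bell_scale C m ^+ 2 * (c * (zsign bQ k * V q (bxor k aQ)))^*.
Proof.
move/matrixP/(_ (enum_rank q) (enum_rank k)); rewrite [RHS]mxE mulmx_pmx => <-.
rewrite -mxof_adj_mul /pmx !mulmx_mxof mxofE /oracle_amp sum_pbits.
rewrite rmorph_sum big_distrr; apply: eq_bigr => s _ /=.
rewrite rmorphM rmorph_sum big_distrl big_distrr; apply: eq_bigr => t _ /=.
rewrite bell_oracle_vec_true /tele_kraus pfst_pair psnd_pair.
by rewrite !rmorphM /= conj_pauli conj_bell_scale; ring.
Qed.

Lemma tele_bell (aQ : pbits m -> bits m) b q q' :
  (forall o, pauli_correction (mxof U) (mxof V) (pfst o) (psnd o) (aQ o)) ->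
  \sum_k \sum_o (bxor k (aQ o) == b)%:R * (amp true k o q * (amp true k o q')^*)
  = (V q b)^* * V q' b.
Proof.
move=> aQ_corr; rewrite exchange_big /=.
have E o : \sum_k (bxor k (aQ o) == b)%:R * (amp true k o q * (amp true k o q')^*)
    = bell_scale C m ^+ 4 * ((V q b)^* * V q' b).
  have [c [bQ [c_norm /tele_amp_true amp_true]]] := aQ_corr o.
  under eq_bigr do rewrite bxor_eq; rewrite sumr_delta !amp_true bxorK.
  set z := zsign bQ _.
  have cc : c * c^* = 1 by rewrite -normCK c_norm expr1n.
  have zz : z * z^* = 1 by rewrite -normCK norm_zsign expr1n.
  rewrite !rmorphM /= !conjCK conj_bell_scale.
  transitivity (bell_scale C m ^+ 4 * ((V q b)^* * V q' b) * ((c * c^*) * (z * z^*))).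
    by ring.
  by rewrite cc zz !mulr1.
under eq_bigr do rewrite E.
by rewrite sumr_const -mulr_natr mulrAC bell_scale_card_pbits mul1r.
Qed.

End Teleportation.

Theorem mainTheorem19 (C : numClosedFieldType) (n nA : nat)
    (f : bits n -> bits n -> bool) (C0 C1 : bits nA -> bits nA -> C) :
  clifford C0 -> clifford C1 ->
  exists P : oprotocol C (bits n) (bits n) (bits nA)
               {ffun 'I_nA -> (bool * bool)%type}
               {ffun 'I_nA -> (bool * bool)%type}
               (bits nA) (bits nA),
    forall (x y : bits n) (rho : bits nA -> bits nA -> C)
           (zz ww : (bits nA * bits nA)%type),
      oprot_output P f (@bell_oracle_vec C nA) x y rho zz ww
      = clifford_measure (if f x y then C1 else C0) rho zz ww.
Proof.
move=> /clifford_mxof[C0_unitary C0_conj] /clifford_mxof[C1_unitary C1_conj].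
have /fin_all_exists[aQ aQ_corr] : forall o : pbits nA,
    exists aQ, pauli_correction (mxof C0) (mxof C1) (pfst o) (psnd o) aQ.
  by move=> o; apply: pauli_correction_exists.
pose dec x y (o : pbits nA) k := if f x y then bxor k (aQ o) else psnd o.
exists (postprocessing_protocol (tele_kraus_tp C0_unitary C1_unitary) dec) => x y rho zz ww.
rewrite oprot_output_postprocessing; apply: clifford_measure_postprocessed => b q q'.
by rewrite /dec; case: (f x y); [apply: tele_bell | apply: tele_computational].
Qed.
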